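(* Let $r>c>\nu$ and $0<t<r-\nu$, set $R=(r-c)/(r-\nu)$, $\gamma=t/(r-\nu)$, fix $\rho\in[0,1)$, and for each integer $n\ge1$ let $L_n=\sqrt{n/(1+(n-1)\rho)}$ and let $Y_n$ be the unique real solution of $$R=\gamma\,\Phi(Y_n)+(1-\gamma)\,\Phi(L_nY_n),$$ with $\Phi$ the standard normal cdf. If $R>1/2$, then $0<Y_1<L_2Y_2<L_3Y_3<\dots<L_nY_n<\dots$. If $R<1/2$, then $0>Y_1>L_2Y_2>L_3Y_3>\dots>L_nY_n>\dots$.
   Context: $Y_n$ is the standardized optimal common order quantity of a transshipment coalition of $n$ identical newsvendors (selling price $r$, cost $c$, salvage value $\nu$, unit transportation cost $t$) facing jointly normal demands with common pairwise correlation $\rho$. Note $L_1=1$. The right-hand side of the defining equation is strictly increasing in $Y_n$ from $0$ to $1$, so $Y_n$ is well defined. *)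

From Stdlib Require Import Reals Lra.
Open Scope R_scope.

Definition std_normal_pdf (t : R) : R := exp (- (t * t) / 2) / sqrt (2 * PI).

Lemma std_normal_pdf_continuous : continuity std_normal_pdf.
Proof.
  unfold std_normal_pdf. intro x.
  apply continuity_pt_div.
  - apply continuity_pt_comp with (f1 := fun t => - (t * t) / 2).
    + reg.
    + apply derivable_continuous_pt, derivable_pt_exp.
  - apply continuity_pt_const. intros a b; reflexivity.
  - assert (0 < sqrt (2 * PI)) by (apply sqrt_lt_R0; pose proof PI_RGT_0; lra). lra.
Qed.

Lemma std_normal_pdf_integrable (x : R) : Riemann_integrable std_normal_pdf 0 x.
Proof.
  destruct (Rle_dec 0 x) as [H|H].
  - apply continuity_implies_RiemannInt; [exact H|].
    intros; apply std_normal_pdf_continuous.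
  - apply RiemannInt_P1, continuity_implies_RiemannInt; [lra|].
    intros; apply std_normal_pdf_continuous.
Qed.

(* Standard normal cdf: Phi x = 1/2 + int_0^x pdf (signed Riemann integral),
   which equals int_{-oo}^x pdf since int_{-oo}^0 pdf = 1/2. *)
Definition Phi (x : R) : R := / 2 + RiemannInt (std_normal_pdf_integrable x).

Definition Lcoef (rho : R) (n : nat) : R :=
  sqrt (INR n / (1 + (INR n - 1) * rho)).

(* Write the defining equation as R = m_L(Y) with
   m_L(y) = gamma F(y) + (1 - gamma) F(L y) for a strictly increasing F with
   F(0) = 1/2.  Since m_L(y) <= 1/2 whenever y <= 0, R > 1/2 forces Y > 0.
   If L < L' and m_L(y) = m_L'(y') with y > 0, then L' y' <= L y would give
   y' <= L y / L' < y, hence m_L'(y') < m_L(y); so L y < L' y'.  As L_n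
   increases strictly in n, this orders the L_n Y_n.  The case R < 1/2 is
   the same argument for the reflected function x |-> 1 - F(-x). *)

From Stdlib Require Import Reals Lra Psatz.
Open Scope R_scope.

Definition mix (F : R -> R) (g L y : R) : R := g * F y + (1 - g) * F (L * y).

Definition mirror (F : R -> R) (x : R) : R := 1 - F (- x).

Lemma mix_mirror (F : R -> R) (g L y : R) :
  mix (mirror F) g L (- y) = 1 - mix F g L y.
Proof.
  unfold mix, mirror.
  replace (- - y) with y by ring. replace (- (L * - y)) with (L * y) by ring.
  ring.
Qed.

Section MonotoneMixture.

Variable F : R -> R.
Hypothesis F_increasing : forall x y, x < y -> F x < F y.
Hypothesis F_0 : F 0 = / 2.
Variable g : R.
Hypothesis g_pos : 0 < g.
Hypothesis g_lt_1 : g < 1.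

Lemma F_le (x y : R) : x <= y -> F x <= F y.
Proof. intros [Hxy | ->]; [left; apply F_increasing |]; lra. Qed.

Lemma mix_pos (L y : R) : 0 < L -> / 2 < mix F g L y -> 0 < y.
Proof.
  unfold mix. intros HL Hm.
  destruct (Rlt_or_le 0 y) as [Hy | Hy]; [exact Hy | exfalso].
  assert (HFy : F y <= / 2) by (rewrite <- F_0; apply F_le; exact Hy).
  assert (HFLy : F (L * y) <= / 2) by (rewrite <- F_0; apply F_le; nra).
  nra.
Qed.

Lemma mix_lt (L1 L2 y1 y2 : R) :
  0 < L1 -> L1 < L2 -> mix F g L1 y1 = mix F g L2 y2 -> / 2 < mix F g L1 y1 ->
  L1 * y1 < L2 * y2.
Proof.
  intros HL1 HL12 Heq Hm.
  assert (Hy1 : 0 < y1) by exact (mix_pos L1 y1 HL1 Hm).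
  destruct (Rlt_or_le (L1 * y1) (L2 * y2)) as [H | H]; [exact H | exfalso].
  assert (Hy : y2 < y1).
  { apply (Rmult_lt_reg_l L2); [lra |].
    apply Rle_lt_trans with (L1 * y1); [exact H | nra]. }
  pose proof (F_increasing _ _ Hy). pose proof (F_le _ _ H).
  unfold mix in Heq. nra.
Qed.

End MonotoneMixture.

Section ReflectedMixture.

Variable F : R -> R.
Hypothesis F_increasing : forall x y, x < y -> F x < F y.
Hypothesis F_0 : F 0 = / 2.
Variable g : R.
Hypothesis g_pos : 0 < g.
Hypothesis g_lt_1 : g < 1.

Lemma mirror_increasing (x y : R) : x < y -> mirror F x < mirror F y.
Proof. intro Hxy. unfold mirror. pose proof (F_increasing (- y) (- x)). lra. Qed.

Lemma mirror_0 : mirror F 0 = / 2.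
Proof. unfold mirror. rewrite Ropp_0, F_0. field. Qed.

Lemma mix_neg (L y : R) : 0 < L -> mix F g L y < / 2 -> y < 0.
Proof.
  intros HL Hm.
  enough (0 < - y) by lra.
  apply (mix_pos (mirror F) mirror_increasing mirror_0 g g_pos g_lt_1 L); [exact HL |].
  rewrite mix_mirror. lra.
Qed.

Lemma mix_gt (L1 L2 y1 y2 : R) :
  0 < L1 -> L1 < L2 -> mix F g L1 y1 = mix F g L2 y2 -> mix F g L1 y1 < / 2 ->
  L2 * y2 < L1 * y1.
Proof.
  intros HL1 HL12 Heq Hm.
  enough (L1 * - y1 < L2 * - y2) by lra.
  apply (mix_lt (mirror F) mirror_increasing mirror_0 g g_pos g_lt_1); try assumption;
    rewrite !mix_mirror; lra.
Qed.

End ReflectedMixture.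

Lemma Phi_0 : Phi 0 = / 2.
Proof. unfold Phi. rewrite RiemannInt_P9. ring. Qed.

(* The density is bounded below on [x, y] by its value at |x| + |y|, so the
   integral over [x, y] is at least that value times (y - x) > 0. *)
Lemma Phi_increasing (x y : R) : x < y -> Phi x < Phi y.
Proof.
  intro Hxy. unfold Phi.
  set (M := Rabs x + Rabs y).
  set (m := std_normal_pdf M).
  assert (Hm : 0 < m).
  { unfold m, std_normal_pdf. apply Rdiv_lt_0_compat; [apply exp_pos |].
    apply sqrt_lt_R0. pose proof PI_RGT_0. lra. }
  assert (pxy : Riemann_integrable std_normal_pdf x y).
  { apply continuity_implies_RiemannInt; [lra |].
    intros; apply std_normal_pdf_continuous. }
  assert (Hc : Riemann_integrable (fct_cte m) x y).
  { apply continuity_implies_RiemannInt; [lra |]. intros; apply continuity_const.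
    intros a b; reflexivity. }
  assert (Hle : RiemannInt Hc <= RiemannInt pxy).
  { apply RiemannInt_P19; [lra |]. intros s Hs. unfold fct_cte, m, std_normal_pdf, Rdiv.
    apply Rmult_le_compat_r.
    { left. apply Rinv_0_lt_compat, sqrt_lt_R0. pose proof PI_RGT_0. lra. }
    assert (Hss : s * s <= M * M).
    { unfold M. destruct (Rcase_abs x), (Rcase_abs y);
        [rewrite (Rabs_left x), (Rabs_left y) | rewrite (Rabs_left x), (Rabs_right y)
        | rewrite (Rabs_right x), (Rabs_left y) | rewrite (Rabs_right x), (Rabs_right y)];
        try lra; nra. }
    destruct (Rle_lt_or_eq_dec _ _ Hss) as [Hlt | ->]; [left; apply exp_increasing |]; lra. }
  rewrite RiemannInt_P15 in Hle.
  rewrite <- (RiemannInt_P26 (std_normal_pdf_integrable x) pxy (std_normal_pdf_integrable y)).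
  assert (0 < m * (y - x)) by (apply Rmult_lt_0_compat; lra).
  lra.
Qed.

Lemma Lcoef_pos (rho : R) (n : nat) : 0 <= rho -> (1 <= n)%nat -> 0 < Lcoef rho n.
Proof.
  intros Hr Hn. unfold Lcoef. apply sqrt_lt_R0.
  apply le_INR in Hn. simpl in Hn.
  apply Rdiv_lt_0_compat; nra.
Qed.

(* n (1 + n rho) < (n + 1) (1 + (n - 1) rho) reduces to rho < 1. *)
Lemma Lcoef_lt_S (rho : R) (n : nat) :
  0 <= rho -> rho < 1 -> (1 <= n)%nat -> Lcoef rho n < Lcoef rho (S n).
Proof.
  intros Hr Hr1 Hn. unfold Lcoef. rewrite S_INR.
  apply le_INR in Hn. simpl in Hn.
  set (d := 1 + (INR n - 1) * rho). set (d' := 1 + (INR n + 1 - 1) * rho).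
  assert (Hd : 0 < d) by (unfold d; nra).
  assert (Hd' : 0 < d') by (unfold d'; nra).
  apply sqrt_lt_1; try (left; apply Rdiv_lt_0_compat; lra).
  apply (Rmult_lt_reg_r (d * d')); [nra |].
  replace (INR n / d * (d * d')) with (INR n * d') by (field; lra).
  replace ((INR n + 1) / d' * (d * d')) with ((INR n + 1) * d) by (field; lra).
  unfold d, d'. nra.
Qed.

Theorem theorem4 (r c nu t rho : R) (Y : nat -> R) :
  r > c -> c > nu -> 0 < t -> t < r - nu ->
  0 <= rho -> rho < 1 ->
  (forall n : nat, (1 <= n)%nat ->
     (r - c) / (r - nu) =
       (t / (r - nu)) * Phi (Y n) + (1 - t / (r - nu)) * Phi (Lcoef rho n * Y n)) ->
  ((r - c) / (r - nu) > / 2 ->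
     0 < Y 1%nat /\
     forall n : nat, (1 <= n)%nat ->
       Lcoef rho n * Y n < Lcoef rho (S n) * Y (S n)) /\
  ((r - c) / (r - nu) < / 2 ->
     0 > Y 1%nat /\
     forall n : nat, (1 <= n)%nat ->
       Lcoef rho n * Y n > Lcoef rho (S n) * Y (S n)).
Proof.
  intros Hrc Hcn Ht Htr Hr0 Hr1 Heq.
  set (R0 := (r - c) / (r - nu)) in *.
  set (g := t / (r - nu)) in *.
  assert (Hg : 0 < g) by (apply Rdiv_lt_0_compat; lra).
  assert (Hg1 : g < 1).
  { apply (Rmult_lt_reg_r (r - nu)); [lra |].
    unfold g, Rdiv. rewrite Rmult_assoc, Rinv_l; lra. }
  assert (Hmix : forall n, (1 <= n)%nat -> mix Phi g (Lcoef rho n) (Y n) = R0)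
    by (intros n Hn; symmetry; exact (Heq n Hn)).
  assert (HL1 : 0 < Lcoef rho 1) by (apply Lcoef_pos; auto).
  split; intro HR; split.
  - apply (mix_pos Phi Phi_increasing Phi_0 g Hg Hg1 (Lcoef rho 1));
      [exact HL1 | rewrite Hmix; auto].
  - intros n Hn.
    apply (mix_lt Phi Phi_increasing Phi_0 g Hg Hg1);
      [apply Lcoef_pos | apply Lcoef_lt_S | rewrite !Hmix | rewrite Hmix]; auto.
  - apply (mix_neg Phi Phi_increasing Phi_0 g Hg Hg1 (Lcoef rho 1));
      [exact HL1 | rewrite Hmix; auto].
  - intros n Hn.
    apply (mix_gt Phi Phi_increasing Phi_0 g Hg Hg1);
      [apply Lcoef_pos | apply Lcoef_lt_S | rewrite !Hmix | rewrite Hmix]; auto.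
Qed.
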